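(* Let $\mathcal G$ be an étale groupoid, $Z$ a locally compact Hausdorff proper $\mathcal G$-compact $\mathcal G$-space, $K_1,K_2$ compact subsets of $\mathcal G$, and $\phi_1:Z\to P_{K_1}(\mathcal G)$, $\phi_2:Z\to P_{K_2}(\mathcal G)$ $\mathcal G$-equivariant continuous maps. Then there exists a compact subset $K\supseteq K_1\cup K_2$ of $\mathcal G$ such that $\iota_{K_1,K}\circ\phi_1$ and $\iota_{K_2,K}\circ\phi_2$ are $\mathcal G$-equivariantly homotopic maps $Z\to P_K(\mathcal G)$.
   Context: Étale groupoids are locally compact Hausdorff with range map a local homeomorphism. $P(\mathcal G)$ is the space of positive Radon measures $\mu$ on $\mathcal G$ with $\mu(\mathcal G)=1$ and support contained in a single fibre $r^{-1}(x)$, with the weak-$*$ topology from $C_c(\mathcal G,\mathbb R)$ and $\mathcal G$-action by left translation, $\gamma(\sum c_i\delta_{\gamma_i})=\sum c_i\delta_{\gamma\gamma_i}$. For compact $K\subseteq\mathcal G$, $P_K(\mathcal G)$ is the subspace of finitely supported $\mu\in P(\mathcal G)$ whose support $\delta$ satisfies $r(\gamma_1)=r(\gamma_2)$ and $\gamma_1^{-1}\gamma_2\in K$ for all $\gamma_1,\gamma_2\in\delta$ (the geometric realization of the Rips complex). For $K'\subseteq K$, $\iota_{K',K}:P_{K'}(\mathcal G)\hookrightarrow P_K(\mathcal G)$ is the inclusion. A $\mathcal G$-space is $\mathcal G$-compact if it is $\mathcal GC$ for some compact $C$; a $\mathcal G$-homotopy is a $\mathcal G$-equivariant continuous map $[0,1]\times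 Z\to P_K(\mathcal G)$. *)

From HB Require Import structures.
From mathcomp Require Import all_boot all_order all_algebra.
From mathcomp Require Import all_classical all_reals all_analysis.
Set Implicit Arguments. Unset Strict Implicit. Unset Printing Implicit Defensive.
Import Order.TTheory GRing.Theory Num.Theory numFieldNormedType.Exports.
Local Open Scope classical_set_scope.
Local Open Scope ring_scope.

Record groupoid_ops (G : Type) := GroupoidOps {
  gunits : set G;
  grange : G -> G;
  gsource : G -> G;
  gmul : G -> G -> G;      (* composition, meaningful when s g = r h *)
  ginv : G -> G }.

Definition is_groupoid (G : Type) (o : groupoid_ops G) : Prop :=
  let r := grange o in let s := gsource o in
  let m := gmul o in let i := ginv o in
  (((forall g, gunits o (r g) /\ gunits o (s g))) /\
     ((forall u, gunits o u -> r u = u /\ s u = u)) /\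
     ((forall g h, s g = r h -> r (m g h) = r g /\ s (m g h) = s h)) /\
     ((forall g h k, s g = r h -> s h = r k -> m (m g h) k = m g (m h k))) /\
     ((forall g, m (r g) g = g /\ m g (s g) = g) /\
      (forall g, r (i g) = s g /\ s (i g) = r g /\
                 m g (i g) = r g /\ m (i g) g = s g))).

(* r is a local homeomorphism: continuous, and every arrow has an open
   neighbourhood U on which r is injective and maps open subsets of U to
   open sets (so r|U : U -> r(U) is a homeomorphism onto an open set). *)
Definition local_homeomorphism (X Y : topologicalType) (f : X -> Y) : Prop :=
  continuous f /\
  forall x, exists U : set X, ((open U) /\
     (U x) /\
     ({in U &, injective f}) /\
     (forall V : set X, open V -> V `<=` U -> open (f @` V))).

Definition etale_groupoid (G : topologicalType) (o : groupoid_ops G) : Prop :=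
  ((is_groupoid o) /\
     (hausdorff_space G) /\
     (locally_compact [set: G]) /\
     ({within [set gh : G * G | gsource o gh.1 = grange o gh.2],
         continuous (fun gh : G * G => gmul o gh.1 gh.2)}) /\
     (continuous (ginv o) /\
      local_homeomorphism (grange o))).

Definition G_space (G Z : topologicalType) (o : groupoid_ops G)
    (p : Z -> G) (act : G -> Z -> Z) : Prop :=
  ((continuous p /\ (forall z, gunits o (p z))) /\
     ((forall g z, gsource o g = p z -> p (act g z) = grange o g)) /\
     ((forall z, act (p z) z = z)) /\
     ((forall g h z, gsource o g = grange o h -> gsource o h = p z ->
                     act (gmul o g h) z = act g (act h z))) /\
     ({within [set gz : G * Z | gsource o gz.1 = p gz.2],
         continuous (fun gz : G * Z => act gz.1 gz.2)})).

Definition proper_action (G Z : topologicalType) (o : groupoid_ops G)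
    (p : Z -> G) (act : G -> Z -> Z) : Prop :=
  forall C : set (Z * Z), compact C ->
    compact [set gz : G * Z | gsource o gz.1 = p gz.2 /\
                              C (act gz.1 gz.2, gz.2)].

Definition G_compact (G Z : topologicalType) (o : groupoid_ops G)
    (p : Z -> G) (act : G -> Z -> Z) : Prop :=
  exists C : set Z, compact C /\
    forall z, exists g c, ((C c) /\
     (gsource o g = p c) /\
     (z = act g c)).

(* Finitely supported measures on G are represented by their mass function
   mu : G -> R, mu = sum_{g in supp mu} mu(g) delta_g. *)
Definition msupp (G : Type) (R : realType) (mu : G -> R) : set G :=
  [set g | mu g != 0].

Definition mint (G : choiceType) (R : realType) (mu : G -> R) (f : G -> R) : R :=
  \sum_(g \in msupp mu) mu g * f g.

Definition in_PK (G : choiceType) (R : realType) (o : groupoid_ops G)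
    (K : set G) (mu : G -> R) : Prop :=
  (((forall g, 0 <= mu g)) /\
     (finite_set (msupp mu)) /\
     (\sum_(g \in msupp mu) mu g = 1) /\
     ((forall g1 g2, msupp mu g1 -> msupp mu g2 ->
         grange o g1 = grange o g2 /\ K (gmul o (ginv o g1) g2)))).

(* left translation: (g mu)(eta) = mu(g^{-1} eta) on r^{-1}(r g), 0 elsewhere;
   i.e. g (sum c_i delta_{g_i}) = sum c_i delta_{g g_i}. *)
Definition mtranslate (G : Type) (R : realType) (o : groupoid_ops G)
    (g : G) (mu : G -> R) : G -> R :=
  fun eta => if `[< grange o eta = grange o g >]
             then mu (gmul o (ginv o g) eta) else 0.

Definition Cc (G : topologicalType) (R : realType) (f : G -> R) : Prop :=
  continuous f /\ exists C : set G, compact C /\ forall x, ~ C x -> f x = 0.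

(* continuity of a map into P(G) for the weak-* topology from C_c(G,R)
   (the initial topology of the maps mu |-> int f dmu), restricted to A *)
Definition weak_star_continuous_within (X G : topologicalType) (R : realType)
    (A : set X) (Phi : X -> G -> R) : Prop :=
  forall f : G -> R, Cc f -> {within A, continuous (fun x => mint (Phi x) f)}.

Definition equivariant_into_PK (G Z : topologicalType) (R : realType)
    (o : groupoid_ops G) (p : Z -> G) (act : G -> Z -> Z)
    (K : set G) (phi : Z -> G -> R) : Prop :=
  (((forall z, in_PK o K (phi z))) /\
     ((forall z g, msupp (phi z) g -> grange o g = p z)) /\
     ((forall g z, gsource o g = p z ->
                   phi (act g z) = mtranslate o g (phi z)))).

Definition equivariant_map_PK (G Z : topologicalType) (R : realType)
    (o : groupoid_ops G) (p : Z -> G) (act : G -> Z -> Z)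
    (K : set G) (phi : Z -> G -> R) : Prop :=
  equivariant_into_PK o p act K phi /\
  weak_star_continuous_within [set: Z] phi.

(* G-homotopy H : [0,1] x Z -> P_K(G) between phi0 and phi1
   ([0,1] x Z with the action of G on the Z factor). *)
Definition G_homotopic_PK (G Z : topologicalType) (R : realType)
    (o : groupoid_ops G) (p : Z -> G) (act : G -> Z -> Z)
    (K : set G) (phi0 phi1 : Z -> G -> R) : Prop :=
  exists H : R * Z -> G -> R,
    ((weak_star_continuous_within [set tz : R * Z | 0 <= tz.1 <= 1] H) /\
     ((forall t, 0 <= t <= 1 ->
           equivariant_into_PK o p act K (fun z => H (t, z)))) /\
     ((forall z, H (0, z) = phi0 z)) /\
     ((forall z, H (1, z) = phi1 z))).

From HB Require Import structures.
From mathcomp Require Import all_boot all_order all_algebra.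
From mathcomp Require Import all_classical all_reals all_analysis.
Set Implicit Arguments. Unset Strict Implicit. Unset Printing Implicit Defensive.
Import Order.TTheory GRing.Theory Num.Theory numFieldNormedType.Exports.
Local Open Scope classical_set_scope.
Local Open Scope ring_scope.

(* The straight-line homotopy t |-> (1 - t) phi1 + t phi2 takes values in
   P_K(G) as soon as K also contains every g1^-1 g2 with g1, g2 support points
   of phi1(z), phi2(z) (in either order).  Left translation does not change
   these differences, so it suffices to bound them for z in a compact set C
   with G C = Z.  Testing weak-* continuity against a bump function at a
   support point shows that near each z the supports of phi_i meet a fixed
   compact set; by compactness of C the supports of all phi_i(c), c in C, meet
   one compact set W_i, hence lie in the compact set L_i = W_i K_i.  The
   differences then lie in L_1^-1 L_2 or L_2^-1 L_1. *)

Lemma Cc_bump (R : realType) (G : topologicalType) (g0 : G) :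
  hausdorff_space G -> locally_compact [set: G] ->
  exists h : G -> R, [/\ Cc h, forall x, 0 <= h x & h g0 = 1].
Proof.
move=> hG lcG; have [U nU [cU _]] := lcG g0 I; rewrite withinET in nU.
have clB : closed (~` interior U) by apply: open_closedC; exact: open_interior.
have nB : ~ (~` interior U) g0 by move/(_ nU).
have := @locally_compact_completely_regular G R lcG hG g0 _ clB nB.
move=> /(@uniform_separatorP _ R) [f [cf f01 f0 f1]].
exists (fun x => 1 - f x); split.
- split; first by move=> x; apply: cvgB; [exact: cvg_cst | exact: cf].
  exists U; split => // x nUx.
  have -> : f x = 1 by apply: f1; exists x => // /interior_subset.
  by rewrite subrr.
- move=> x; have /f01 := imageT f x; rewrite /= in_itv /= => /andP[_].
  by rewrite subr_ge0.
- have -> : f g0 = 0 by apply: f0; exists g0.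
  by rewrite subr0.
Qed.

Section GroupoidAlgebra.
Variables (G : Type) (o : groupoid_ops G).
Hypothesis groupoid_o : is_groupoid o.
Local Notation r := (grange o).
Local Notation s := (gsource o).
Local Notation m := (gmul o).
Local Notation i := (ginv o).

Lemma grangeM g h : s g = r h -> r (m g h) = r g.
Proof. by case: groupoid_o => _ [_ [H _]] /H []. Qed.

Lemma gsourceM g h : s g = r h -> s (m g h) = s h.
Proof. by case: groupoid_o => _ [_ [H _]] /H []. Qed.

Lemma gmulA g h k : s g = r h -> s h = r k -> m g (m h k) = m (m g h) k.
Proof. by case: groupoid_o => _ [_ [_ [H _]]] gh hk; rewrite H. Qed.

Lemma gmul1g g : m (r g) g = g.
Proof. by case: groupoid_o => _ [_ [_ [_ [H _]]]]; case: (H g). Qed.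

Lemma gmulg1 g : m g (s g) = g.
Proof. by case: groupoid_o => _ [_ [_ [_ [H _]]]]; case: (H g). Qed.

Lemma grangeV g : r (i g) = s g.
Proof. by case: groupoid_o => _ [_ [_ [_ [_ H]]]]; case: (H g). Qed.

Lemma gsourceV g : s (i g) = r g.
Proof. by case: groupoid_o => _ [_ [_ [_ [_ H]]]]; case: (H g) => _ []. Qed.

Lemma gmulgV g : m g (i g) = r g.
Proof. by case: groupoid_o => _ [_ [_ [_ [_ H]]]]; case: (H g) => _ [_ []]. Qed.

Lemma gmulVg g : m (i g) g = s g.
Proof. by case: groupoid_o => _ [_ [_ [_ [_ H]]]]; case: (H g) => _ [_ []]. Qed.

Lemma gmulKVg g h : r g = r h -> m g (m (i g) h) = h.
Proof.
by move=> rgh; rewrite gmulA ?grangeV ?gsourceV // gmulgV rgh gmul1g.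
Qed.

Lemma gmulKg g h : s g = r h -> m (i g) (m g h) = h.
Proof. by move=> gh; rewrite gmulA ?gsourceV // gmulVg gh gmul1g. Qed.

Lemma ginvM g h : s g = r h -> i (m g h) = m (i h) (i g).
Proof.
move=> gh; set v := m (i h) (i g).
have rv : r v = s (m g h) by rewrite grangeM ?grangeV ?gsourceV ?gsourceM.
have mv : m (m g h) v = r (m g h).
  rewrite -gmulA ?gsourceM ?rv ?gsourceM //.
  rewrite [m h v]gmulA ?grangeV ?gsourceV // gmulgV.
  have -> : m (r h) (i g) = i g by rewrite -gh -grangeV gmul1g.
  by rewrite gmulgV grangeM.
rewrite -[i _]gmulg1 gsourceV -mv gmulA ?gsourceV ?grangeM //.
- by rewrite gmulVg -rv gmul1g.
- by rewrite gsourceM ?grangeV.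
- by rewrite gsourceV grangeV.
Qed.

Lemma gmulV_translate g h1 h2 : r h1 = r g -> r h2 = r g ->
  m (i (m (i g) h1)) (m (i g) h2) = m (i h1) h2.
Proof.
move=> rh1 rh2; rewrite ginvM ?gsourceV // -gmulA ?grangeV ?gsourceV //.
  by rewrite gmulKg // gsourceV.
by rewrite grangeM ?gsourceV.
Qed.

End GroupoidAlgebra.

Lemma closed_pullback (X Y : topologicalType) (f g : X -> Y) :
  hausdorff_space Y -> continuous f -> continuous g ->
  closed [set xy : X * X | f xy.1 = g xy.2].
Proof.
move=> hY cf cg [x y] clxy; apply: hY => A B nA nB /=.
have nAB : nbhs (x, y) ((f @^-1` A) `*` (g @^-1` B)).
  by exists (f @^-1` A, g @^-1` B) => //; split; [exact: cf | exact: cg].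
have [[a b] [/= fagb [/= Aa Bb]]] := clxy _ nAB.
by exists (f a); split => //; rewrite fagb.
Qed.

Lemma compact_bound_of_local (X Y : topologicalType) (C : set X)
    (P : set Y -> X -> Prop) :
  compact C -> (forall W W' x, W `<=` W' -> P W x -> P W' x) ->
  (forall x, C x -> exists2 V, nbhs x V &
     exists2 W, compact W & forall y, V y -> P W y) ->
  exists2 W, compact W & forall x, C x -> P W x.
Proof.
move=> cC Pmono Ploc.
(* Near-covering compactness against the filter of properties of "all large
   enough compact sets" glues the local bounds. *)
pose F : set_system (set Y) := [set Q | exists2 W0, compact W0 &
   forall W, compact W -> W0 `<=` W -> Q W].
have FF : Filter F.
  constructor.
  - by exists set0 => //; exact: compact0.
  - move=> Q Q' [W0 cW0 QW0] [W1 cW1 QW1]; exists (W0 `|` W1).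
      exact: compactU.
    by move=> W cW sW; split; [apply: QW0 | apply: QW1] => // y ?; apply: sW;
      [left | right].
  - by move=> Q Q' QQ' [W0 cW0 QW0]; exists W0 => // W cW sW; apply/QQ'/QW0.
have [|W0 cW0 PW0] := iffLR (compact_near_coveringP C) cC _ F P FF.
  move=> x Cx; have [V nV [W cW PW]] := Ploc x Cx.
  exists (V, [set W' | W `<=` W']); first by split => //; exists W.
  by move=> [y W'] /= [Vy sW]; apply: Pmono sW (PW y Vy).
by exists W0 => // x Cx; apply: PW0 cW0 (@subset_refl _ W0) x Cx.
Qed.

Section EtaleGroupoid.
Variables (G : topologicalType) (o : groupoid_ops G).
Hypothesis etale_o : etale_groupoid o.
Local Notation r := (grange o).
Local Notation s := (gsource o).
Local Notation m := (gmul o).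
Local Notation i := (ginv o).

Lemma etale_groupoid_is_groupoid : is_groupoid o.
Proof. by case: etale_o. Qed.

Lemma etale_hausdorff : hausdorff_space G.
Proof. by case: etale_o => _ []. Qed.

Lemma etale_locally_compact : locally_compact [set: G].
Proof. by case: etale_o => _ [_ []]. Qed.

Lemma continuous_grange : continuous r.
Proof. by case: etale_o => _ [_ [_ [_ [_ []]]]]. Qed.

Lemma continuous_ginv : continuous i.
Proof. by case: etale_o => _ [_ [_ [_ []]]]. Qed.

Lemma continuous_gsource : continuous s.
Proof.
have -> : s = r \o i.
  apply/funext => g /=.
  by rewrite grangeV //; exact: etale_groupoid_is_groupoid.
move=> g; apply: continuous_comp.
  exact: continuous_ginv.
exact: continuous_grange.
Qed.

Definition mulset (A B : set G) : set G :=
  (fun gh : G * G => m gh.1 gh.2) @` (A `*` B `&` [set gh | s gh.1 = r gh.2]).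

Lemma compact_mulset A B : compact A -> compact B -> compact (mulset A B).
Proof.
move=> cA cB; apply: continuous_compact.
  apply: (@continuous_subspaceW _ _ _ [set gh : G * G | s gh.1 = r gh.2]).
    by move=> gh [].
  by case: etale_o => _ [_ [_ []]].
apply: compact_closedI; first exact: compact_setX.
exact: closed_pullback etale_hausdorff continuous_gsource continuous_grange.
Qed.

Lemma compact_ginv A : compact A -> compact (i @` A).
Proof.
move=> cA; apply: continuous_compact => //.
exact/continuous_subspaceT/continuous_ginv.
Qed.

End EtaleGroupoid.

Section FinitelySupportedMeasures.
Variables (R : realType) (G : choiceType) (o : groupoid_ops G).

Definition mcomb (t : R) (mu nu : G -> R) : G -> R :=
  fun g => (1 - t) * mu g + t * nu g.

Lemma msupp_mcomb t mu nu : msupp (mcomb t mu nu) `<=` msupp mu `|` msupp nu.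
Proof.
move=> g; rewrite /msupp /mcomb /=.
have [->|] := eqVneq (mu g) 0; last by left.
have [->|] := eqVneq (nu g) 0; last by right.
by rewrite !mulr0 addr0 eqxx.
Qed.

Lemma mcomb0 mu nu : mcomb 0 mu nu = mu.
Proof. by apply/funext => g; rewrite /mcomb subr0 mul1r mul0r addr0. Qed.

Lemma mcomb1 mu nu : mcomb 1 mu nu = nu.
Proof. by apply/funext => g; rewrite /mcomb subrr mul0r add0r mul1r. Qed.

Lemma mint_mcomb t mu nu f :
  finite_set (msupp mu) -> finite_set (msupp nu) ->
  mint (mcomb t mu nu) f = (1 - t) * mint mu f + t * mint nu f.
Proof.
move=> fin_mu fin_nu; set S := msupp mu `|` msupp nu.
have widen lam : msupp lam `<=` S -> mint lam f = \sum_(g \in S) lam g * f g.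
  move=> sS; rewrite /mint (fsbig_widen _ _ _ sS) //.
  by move=> g [_ /negP/negPn/eqP lam0]; rewrite /= lam0 mul0r.
rewrite (widen _ (@msupp_mcomb t mu nu)) (widen mu (fun _ => @or_introl _ _)).
rewrite (widen nu (fun _ => @or_intror _ _)).
have fin_S : finite_set S by rewrite finite_setU.
rewrite !fsbig_finite // !mulr_sumr -big_split; apply: eq_bigr => g _.
by rewrite mulrDl !mulrA.
Qed.

Lemma mtranslate_mcomb g t mu nu :
  mtranslate o g (mcomb t mu nu) =
  mcomb t (mtranslate o g mu) (mtranslate o g nu).
Proof.
apply/funext => h; rewrite /mtranslate /mcomb.
by case: ifP; rewrite ?mulr0 ?addr0.
Qed.

Lemma in_PK_msupp_neq0 K (mu : G -> R) : in_PK o K mu -> msupp mu !=set0.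
Proof.
case=> _ [_ [mass1 _]].
have : \sum_(g \in msupp mu) mu g != 0 by rewrite mass1 oner_neq0.
by case/(@fsbigN1 _ _ _ unit _ _ (fun _ g => mu g) tt) => g _; exists g.
Qed.

Lemma in_PK_subset K K' (mu : G -> R) :
  K `<=` K' -> in_PK o K mu -> in_PK o K' mu.
Proof.
move=> sKK' [mu_ge0 [fin_mu [mass1 diam]]]; split; [|split; [|split]] => //.
by move=> g1 g2 /(diam g1 g2) H /H [rg]/sKK'.
Qed.

Lemma in_PK_mcomb K t mu nu : 0 <= t <= 1 ->
  in_PK o K mu -> in_PK o K nu ->
  (forall g1 g2, (msupp mu `|` msupp nu) g1 -> (msupp mu `|` msupp nu) g2 ->
     grange o g1 = grange o g2 /\ K (gmul o (ginv o g1) g2)) ->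
  in_PK o K (mcomb t mu nu).
Proof.
move=> /andP[t_ge0 t_le1] [mu_ge0 [fin_mu [mass_mu _]]].
move=> [nu_ge0 [fin_nu [mass_nu _]]] diam.
have mass lam : \sum_(g \in msupp lam) lam g = mint lam (fun=> 1).
  by apply: eq_fsbigr => g _; rewrite mulr1.
split; [|split; [|split]].
- by move=> g; rewrite addr_ge0 ?mulr_ge0 ?subr_ge0.
- by apply: sub_finite_set (@msupp_mcomb t mu nu) _; rewrite finite_setU.
- by rewrite mass mint_mcomb // -!mass mass_mu mass_nu !mulr1 subrK.
- by move=> g1 g2 /msupp_mcomb s1 /msupp_mcomb s2; apply: diam.
Qed.

End FinitelySupportedMeasures.

Section SupportBounds.
Variables (R : realType) (G Z : topologicalType) (o : groupoid_ops G).
Hypothesis etale_o : etale_groupoid o.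

Lemma nbhs_msupp_meets_compact (K : set G) (phi : Z -> G -> R) z :
  in_PK o K (phi z) -> weak_star_continuous_within [set: Z] phi ->
  exists2 V, nbhs z V &
    exists2 W, compact W & forall y, V y -> W `&` msupp (phi y) !=set0.
Proof.
move=> phiz wc; have [g0 phiz_g0] := in_PK_msupp_neq0 phiz.
have [h [[ch [W [cW hW]]] h_ge0 hg0]] :=
  @Cc_bump R G g0 (etale_hausdorff etale_o) (etale_locally_compact etale_o).
pose F y := mint (phi y) h.
have cF : {for z, continuous F}.
  have := wc h (conj ch (ex_intro _ W (conj cW hW))).
  rewrite continuous_open_subspace; last exact: openT.
  by move=> /(_ z (in_setT z)).
have Fz : 0 < F z.
  have [phiz_ge0 [fin _]] := phiz.
  rewrite /F /mint (fsbigD1 g0) //= hg0 mulr1 ltr_wpDr //.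
    by apply: fsumr_ge0 => g _; rewrite mulr_ge0.
  by rewrite lt0r phiz_g0 phiz_ge0.
exists [set y | 0 < F y]; first exact: (@cvgr_gt R _ _ _ F (F z) cF 0 Fz).
exists W => // y /= /gt_eqF/negbT.
case/(@fsbigN1 _ _ _ unit _ _ (fun _ g => phi y g * h g) tt) => g phiy_g.
rewrite mulf_eq0 negb_or => /andP[_ hg]; exists g; split => //.
by apply: contrapT => /hW; apply/eqP.
Qed.

Lemma compact_msupp_bound (K : set G) (phi : Z -> G -> R) (C : set Z) :
  (forall z, in_PK o K (phi z)) -> weak_star_continuous_within [set: Z] phi ->
  compact K -> compact C ->
  exists2 L, compact L & forall c g, C c -> msupp (phi c) g -> L g.
Proof.
move=> phiK wc cK cC; have groupoid_o := etale_groupoid_is_groupoid etale_o.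
have [W cW meetW] :
    exists2 W, compact W & forall c, C c -> W `&` msupp (phi c) !=set0.
  apply: compact_bound_of_local cC _ _.
    by move=> W W' y sWW'; apply: subsetI_neq0.
  by move=> x _; exact: nbhs_msupp_meets_compact.
exists (mulset o W K); first exact: compact_mulset.
move=> c g Cc phic_g; have [w [Ww phic_w]] := meetW c Cc.
have [_ [_ [_ diam]]] := phiK c; have [rwg Kwg] := diam w g phic_w phic_g.
exists (w, gmul o (ginv o w) g); last exact: gmulKVg.
by split; [split|rewrite /= grangeM ?grangeV ?gsourceV].
Qed.

End SupportBounds.

Section EquivariantMaps.
Variables (R : realType) (G Z : topologicalType) (o : groupoid_ops G).
Variables (p : Z -> G) (act : G -> Z -> Z).
Local Notation m := (gmul o).
Local Notation i := (ginv o).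

Lemma equivariant_into_PK_subset (K K' : set G) (phi : Z -> G -> R) :
  K `<=` K' -> equivariant_into_PK o p act K phi ->
  equivariant_into_PK o p act K' phi.
Proof.
by move=> sKK' [phiK eq_phi]; split => // z; apply: in_PK_subset (phiK z).
Qed.

Lemma msupp_diff_mulset (Kp Kq : set G) (phi psi : Z -> G -> R) (C : set Z)
    (Lp Lq : set G) :
  is_groupoid o ->
  equivariant_into_PK o p act Kp phi -> equivariant_into_PK o p act Kq psi ->
  (forall z, exists g c, C c /\ gsource o g = p c /\ z = act g c) ->
  (forall c g, C c -> msupp (phi c) g -> Lp g) ->
  (forall c g, C c -> msupp (psi c) g -> Lq g) ->
  forall z g1 g2, msupp (phi z) g1 -> msupp (psi z) g2 ->
    mulset o (i @` Lp) Lq (m (i g1) g2).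
Proof.
move=> groupoid_o [_ [anchor_phi eq_phi]] [_ [anchor_psi eq_psi]].
move=> GC Lp_phi Lq_psi.
move=> z g1 g2; have [g [c [Cc [gc ->]]]] := GC z.
rewrite eq_phi // eq_psi // /msupp /mtranslate /=.
case: ifPn => [/asboolP rg1 phic_g1|_]; last by rewrite eqxx.
case: ifPn => [/asboolP rg2 psic_g2|_]; last by rewrite eqxx.
exists (i (m (i g) g1), m (i g) g2); last exact: gmulV_translate.
split; first split.
- by exists (m (i g) g1) => //; apply: Lp_phi Cc _.
- exact: Lq_psi Cc _.
- rewrite /= (gsourceV groupoid_o).
  by rewrite (anchor_phi _ _ phic_g1) (anchor_psi _ _ psic_g2).
Qed.

Lemma equivariant_into_PK_mcomb (K : set G) (t : R) (phi psi : Z -> G -> R) :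
  0 <= t <= 1 ->
  equivariant_into_PK o p act K phi -> equivariant_into_PK o p act K psi ->
  (forall z g1 g2, (msupp (phi z) `|` msupp (psi z)) g1 ->
     (msupp (phi z) `|` msupp (psi z)) g2 -> K (m (i g1) g2)) ->
  equivariant_into_PK o p act K (fun z => mcomb t (phi z) (psi z)).
Proof.
move=> t01 [phiK [anchor_phi eq_phi]] [psiK [anchor_psi eq_psi]] diam.
have anchor z g : (msupp (phi z) `|` msupp (psi z)) g -> grange o g = p z.
  by case=> [/anchor_phi|/anchor_psi].
split; [|split].
- move=> z; apply: in_PK_mcomb => // g1 g2 s1 s2.
  by split; [rewrite (anchor z g1 s1) (anchor z g2 s2) | exact: diam s1 s2].
- by move=> z g /msupp_mcomb; apply: anchor.
- by move=> g z gz; rewrite eq_phi // eq_psi // mtranslate_mcomb.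
Qed.

Lemma weak_star_continuous_mcomb (A : set (R * Z)) (phi psi : Z -> G -> R) :
  (forall z, finite_set (msupp (phi z))) ->
  (forall z, finite_set (msupp (psi z))) ->
  weak_star_continuous_within [set: Z] phi ->
  weak_star_continuous_within [set: Z] psi ->
  weak_star_continuous_within A (fun tz => mcomb tz.1 (phi tz.2) (psi tz.2)).
Proof.
move=> fin_phi fin_psi wc_phi wc_psi f Cf.
have cont lam : weak_star_continuous_within [set: Z] lam ->
    continuous (fun tz : R * Z => mint (lam tz.2) f).
  move=> /(_ f Cf); rewrite continuous_open_subspace; last exact: openT.
  move=> c [t z]; apply: (@continuous_comp _ _ _ snd (fun z => mint (lam z) f)).
    exact: cvg_snd.
  exact: c (in_setT z).
under eq_fun do rewrite mint_mcomb //.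
apply: continuous_subspaceT => -[t z].
apply: cvgD; apply: cvgM; [| |exact: cvg_fst|].
- by apply: cvgB; [exact: cvg_cst | exact: cvg_fst].
- exact: cont.
- exact: cont.
Qed.

End EquivariantMaps.

Theorem proposition3p29 (R : realType) (G Z : topologicalType)
  (o : groupoid_ops G) (p : Z -> G) (act : G -> Z -> Z)
  (K1 K2 : set G) (phi1 phi2 : Z -> G -> R) :
  etale_groupoid o ->
  hausdorff_space Z -> locally_compact [set: Z] ->
  G_space o p act -> proper_action o p act -> G_compact o p act ->
  compact K1 -> compact K2 ->
  equivariant_map_PK o p act K1 phi1 ->
  equivariant_map_PK o p act K2 phi2 ->
  exists K : set G, [/\ compact K, K1 `|` K2 `<=` K &
    G_homotopic_PK o p act K phi1 phi2].
Proof.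
move=> etale_o _ _ _ _ [C [cC GC]] cK1 cK2 [eq1 wc1] [eq2 wc2].
have groupoid_o := etale_groupoid_is_groupoid etale_o.
have [L1 cL1 L1_phi1] := compact_msupp_bound etale_o eq1.1 wc1 cK1 cC.
have [L2 cL2 L2_phi2] := compact_msupp_bound etale_o eq2.1 wc2 cK2 cC.
have d12 := msupp_diff_mulset groupoid_o eq1 eq2 GC L1_phi1 L2_phi2.
have d21 := msupp_diff_mulset groupoid_o eq2 eq1 GC L2_phi2 L1_phi1.
set K := K1 `|` K2 `|` mulset o (ginv o @` L1) L2
                     `|` mulset o (ginv o @` L2) L1.
have sK1 : K1 `<=` K by move=> g ?; left; left; left.
have sK2 : K2 `<=` K by move=> g ?; left; left; right.
exists K; split.
- rewrite /K; repeat apply: compactU => //;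
    by apply: compact_mulset => //; apply: compact_ginv.
- by move=> g [/sK1|/sK2].
exists (fun tz => mcomb tz.1 (phi1 tz.2) (phi2 tz.2)).
split; [|split; [|split]].
- apply: weak_star_continuous_mcomb => // z.
  + exact: (eq1.1 z).2.1.
  + exact: (eq2.1 z).2.1.
- move=> t t01; apply: equivariant_into_PK_mcomb => //.
  + exact: equivariant_into_PK_subset eq1.
  + exact: equivariant_into_PK_subset eq2.
  move=> z g1 g2 [s1|s1] [s2|s2].
  + exact/sK1/((eq1.1 z).2.2.2 g1 g2 s1 s2).2.
  + by left; right; apply: d12 s1 s2.
  + by right; apply: d21 s1 s2.
  + exact/sK2/((eq2.1 z).2.2.2 g1 g2 s1 s2).2.
- by move=> z; rewrite mcomb0.
- by move=> z; rewrite mcomb1.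
Qed.
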